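(* Any set of reflections of $G_6$ containing at least one element of $R'=R_1\cup R_1^{-1}$ and at least one element of $S$ generates the entire group $G_6$.
   Context: Let $G_7$ be the subgroup of $GL_2(\mathbb{C})$ generated by $s=\begin{bmatrix}1&0\\0&-1\end{bmatrix}$, $t=\frac14\begin{bmatrix}(1+\sqrt3)+(-1+\sqrt3)i & (1+\sqrt3)+(-1+\sqrt3)i\\ (-1+\sqrt3)-(1+\sqrt3)i & (1-\sqrt3)+(1+\sqrt3)i\end{bmatrix}$ and $u=t^{\top}$ (presentation $\langle s,t,u\mid s^2=t^3=u^3=1,\ stu=ust=tus\rangle$, order $144$). A reflection is a linear map of $\mathbb{C}^2$ whose fixed space has dimension $1$. Let $S$ be the $G_7$-conjugacy class of $s$ (six reflections of order $2$), $R_1$ the $G_7$-conjugacy class of $t$ (four reflections of order $3$), and $R_1^{-1}=\{r^{-1}:r\in R_1\}$. Let $G_6=\langle s,t\rangle$, of order $48$; its fourteen reflections are the elements of $R_1\cup R_1^{-1}\cup S$, and $R_1$, $R_1^{-1}$, $S$ are its reflection conjugacy classes. *)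

From HB Require Import structures.
From mathcomp Require Import all_boot all_order all_algebra all_field.
Set Implicit Arguments. Unset Strict Implicit. Unset Printing Implicit Defensive.
Import Order.TTheory GRing.Theory Num.Theory.
Local Open Scope ring_scope.

Notation mx2 := ('M[algC]_2).

Inductive gen (X : mx2 -> Prop) : mx2 -> Prop :=
  | gen_one : gen X 1%:M
  | gen_in x : X x -> gen X x
  | gen_mul x y : gen X x -> gen X y -> gen X (x *m y)
  | gen_inv x : gen X x -> gen X (invmx x).

Definition sq3 : algC := sqrtC 3%:R.

Definition mat_s : mx2 := \matrix_(i < 2, j < 2)
  (if i == j then (if i == 0 then 1 else -1) else 0).

Definition mat_t : mx2 :=
  let a := (1 + sq3) + (-1 + sq3) * 'i in
  let b := (-1 + sq3) - (1 + sq3) * 'i in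
  let c := (1 - sq3) + (1 + sq3) * 'i in
  (4%:R)^-1 *: \matrix_(i < 2, j < 2)
     (if i == 0 then a else if j == 0 then b else c).

Definition mat_u : mx2 := mat_t^T.

Definition G7 : mx2 -> Prop := gen (fun x => x = mat_s \/ x = mat_t \/ x = mat_u).
Definition G6 : mx2 -> Prop := gen (fun x => x = mat_s \/ x = mat_t).

Definition conj_class (G : mx2 -> Prop) (a : mx2) : mx2 -> Prop :=
  fun x => exists2 g, G g & x = invmx g *m a *m g.

Definition S_cl : mx2 -> Prop := conj_class G7 mat_s.
Definition R1 : mx2 -> Prop := conj_class G7 mat_t.
Definition R1inv : mx2 -> Prop := fun x => exists2 r, R1 r & x = invmx r.
Definition Rprime : mx2 -> Prop := fun x => R1 x \/ R1inv x.

Definition is_reflection (A : mx2) : Prop := \rank (kermx (A - 1%:M)) = 1%N.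

From HB Require Import structures.
From mathcomp Require Import all_boot all_order all_algebra all_field.
From mathcomp Require Import ring.
Set Implicit Arguments. Unset Strict Implicit. Unset Printing Implicit Defensive.
Import Order.TTheory GRing.Theory Num.Theory.
Local Open Scope ring_scope.

(** All matrices involved have entries in Q(sqrt 3, i), so products can be
  computed exactly on rational coordinates.  An element of R' generates the
  same subgroup as its inverse, so we may take it in R1, i.e. of the form
  g^-1 t g with g in G7.  As G6 is normal in G7 and S is G7-stable (both
  checked on the generators s, t, u), conjugating by g reduces the claim to
  <t, s'> = G6 for the six elements s' of S: the class S is computed as the
  orbit of s, and for each s' a breadth-first closure of {t, s'} reaches s and t. *)

Lemma invmx_eq (R : comUnitRingType) n (A B : 'M[R]_n) :
  A *m B = 1%:M -> invmx A = B.
Proof.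
move=> AB; have [uA _] := mulmx1_unit AB.
by rewrite -[invmx A]mulmx1 -AB mulmxA mulVmx // mul1mx.
Qed.

Lemma invmx_mul (R : comUnitRingType) n (A B : 'M[R]_n.+1) :
  A \in unitmx -> B \in unitmx -> invmx (A *m B) = invmx B *m invmx A.
Proof. exact: invrM. Qed.

Lemma invmx_conj (R : comUnitRingType) n (g a : 'M[R]_n.+1) :
  g \in unitmx -> invmx (invmx g *m a *m g) = invmx g *m invmx a *m g.
Proof.
move=> ug; have ugV : invmx g \in unitmx by rewrite unitmx_inv.
have [ua | nua] := boolP (a \in unitmx).
  by rewrite !invmx_mul ?unitmx_mul ?ua ?ugV // invmxK mulmxA.
have nuc : invmx g *m a *m g \notin unitmx by rewrite !unitmx_mul (negbTE nua) andbF.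
by rewrite (invmx_out nuc) (invmx_out nua).
Qed.

Lemma conj_mxK (R : comUnitRingType) n (g a : 'M[R]_n) :
  g \in unitmx -> invmx g *m (g *m a *m invmx g) *m g = a.
Proof. by move=> ug; rewrite !mulmxA mulVmx // mul1mx -mulmxA mulVmx // mulmx1. Qed.

Definition group_closed (H : mx2 -> Prop) : Prop :=
  [/\ H 1%:M, forall x y, H x -> H y -> H (x *m y)
    & forall x, H x -> H (invmx x)].

Lemma group_closed_gen X : group_closed (gen X).
Proof. by split; [exact: gen_one | exact: gen_mul | exact: gen_inv]. Qed.

Lemma gen_min X H : group_closed H -> (forall x, X x -> H x) ->
  forall g : mx2, gen X g -> H g.
Proof. by case=> H1 HM HV XH g; elim=> [|x /XH|x y _ ? _ ?|x _ ?]; auto. Qed.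

Lemma group_closed_conj H g : g \in unitmx -> group_closed H ->
  group_closed (fun y => H (invmx g *m y *m g)).
Proof.
move=> ug [H1 HM HV]; split.
- by rewrite mulmx1 mulVmx.
- move=> x y Hx Hy; have := HM _ _ Hx Hy.
  by rewrite !mulmxA -[_ *m g *m invmx g]mulmxA mulmxV // mulmx1.
- by move=> x /HV; rewrite invmx_conj.
Qed.

Definition conj_stable (P : mx2 -> Prop) (g : mx2) : Prop :=
  forall a, P a -> P (invmx g *m a *m g).

Definition normalizer (P : mx2 -> Prop) (g : mx2) : Prop :=
  [/\ g \in unitmx, conj_stable P g & conj_stable P (invmx g)].

Lemma group_closed_normalizer (P : mx2 -> Prop) : group_closed (normalizer P).
Proof.
have conjM (x y a : mx2) : x \in unitmx -> y \in unitmx ->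
    invmx (x *m y) *m a *m (x *m y) = invmx y *m (invmx x *m a *m x) *m y.
  by move=> ux uy; rewrite invmx_mul // !mulmxA.
split.
- by split; [exact: unitmx1 | move=> a; rewrite !invmx1 mul1mx mulmx1 ..].
- move=> x y [ux Px PVx] [uy Py PVy]; split.
  + by rewrite unitmx_mul ux uy.
  + by move=> a Pa; rewrite conjM //; apply/Py/Px.
  + by move=> a Pa; rewrite invmx_mul // conjM ?unitmx_inv //; apply/PVx/PVy.
- by move=> x [ux Px PVx]; split; rewrite ?unitmx_inv ?invmxK.
Qed.

(* Q(sqrt 3, i) is the 12th cyclotomic field. *)
Definition Q12 := (rat * rat * rat * rat)%type.

Definition Q12C (x : Q12) : algC :=
  let: (a, b, c, d) := x in
  ratr a + ratr b * sq3 + ratr c * 'i + ratr d * (sq3 * 'i).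

Definition addQ12 (x y : Q12) : Q12 :=
  let: (a, b, c, d) := x in let: (e, f, g, h) := y in
  (a + e, b + f, c + g, d + h).

Definition mulQ12 (x y : Q12) : Q12 :=
  let: (a, b, c, d) := x in let: (e, f, g, h) := y in
  (a * e + 3 * (b * f) - (c * g + 3 * (d * h)), a * f + b * e - (c * h + d * g),
   a * g + 3 * (b * h) + (c * e + 3 * (d * f)), a * h + b * g + (c * f + d * e)).

Lemma sq3_mul : sq3 * sq3 = 3.
Proof. by rewrite -expr2 /sq3 sqrtCK. Qed.

Lemma i_mul : 'i * 'i = -1 :> algC.
Proof. by rewrite -expr2 sqrCi. Qed.

Lemma mul_biquadratic (R : comRingType) (S I a b c d e f g h : R) :
  S * S = 3 -> I * I = -1 ->
  (a + b * S + c * I + d * (S * I)) * (e + f * S + g * I + h * (S * I)) =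
  (a * e + 3 * (b * f) - (c * g + 3 * (d * h)))
  + (a * f + b * e - (c * h + d * g)) * S
  + (a * g + 3 * (b * h) + (c * e + 3 * (d * f))) * I
  + (a * h + b * g + (c * f + d * e)) * (S * I).
Proof.
move=> S2 I2; apply/eqP; rewrite -subr_eq0; apply/eqP.
transitivity ((S * S - 3) * (b * f - d * h + (b * h + d * f) * I)
              + (I * I + 1) * ((c + d * S) * (g + h * S))); first by ring.
by rewrite S2 I2 subrr addNr !mul0r addr0.
Qed.

Lemma Q12C_add x y : Q12C (addQ12 x y) = Q12C x + Q12C y.
Proof.
by case: x => [[[a b] c] d]; case: y => [[[e f] g] h]; rewrite /= !rmorphD; ring.
Qed.

Lemma Q12C_mul x y : Q12C (mulQ12 x y) = Q12C x * Q12C y.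
Proof.
case: x => [[[a b] c] d]; case: y => [[[e f] g] h].
rewrite /= (mul_biquadratic _ _ _ _ _ _ _ _ sq3_mul i_mul).
by rewrite !(rmorphD, rmorphB, rmorphM); ring.
Qed.

(* Row-major 2 x 2 matrices. *)
Definition M12 := (Q12 * Q12 * Q12 * Q12)%type.

Definition mulM12 (A B : M12) : M12 :=
  let: (a0, a1, a2, a3) := A in let: (b0, b1, b2, b3) := B in
  (addQ12 (mulQ12 a0 b0) (mulQ12 a1 b2), addQ12 (mulQ12 a0 b1) (mulQ12 a1 b3),
   addQ12 (mulQ12 a2 b0) (mulQ12 a3 b2), addQ12 (mulQ12 a2 b1) (mulQ12 a3 b3)).

Definition trM12 (A : M12) : M12 := let: (a0, a1, a2, a3) := A in (a0, a2, a1, a3).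

Definition Q12mx (A : M12) : mx2 :=
  let: (a0, a1, a2, a3) := A in
  \matrix_(i < 2, j < 2)
    Q12C (if i == 0 then (if j == 0 then a0 else a1) else (if j == 0 then a2 else a3)).

Lemma Q12mx_mul A B : Q12mx (mulM12 A B) = Q12mx A *m Q12mx B.
Proof.
case: A => [[[a0 a1] a2] a3]; case: B => [[[b0 b1] b2] b3].
apply/matrixP => i j; rewrite !mxE !big_ord_recl big_ord0 !mxE.
by case: i => [[|[|//]] ?]; case: j => [[|[|//]] ?]; rewrite /= addr0 !Q12C_add !Q12C_mul.
Qed.

Lemma Q12mx_tr A : Q12mx (trM12 A) = (Q12mx A)^T.
Proof.
case: A => [[[a0 a1] a2] a3]; apply/matrixP => i j; rewrite !mxE.
by case: i => [[|[|//]] ?]; case: j => [[|[|//]] ?].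
Qed.

Definition Q12r (a : rat) : Q12 := (a, 0, 0, 0).
Definition quarter (a b c d : int) : Q12 := (a%:~R / 4, b%:~R / 4, c%:~R / 4, d%:~R / 4).

Definition oneM12 : M12 := (Q12r 1, Q12r 0, Q12r 0, Q12r 1).
Definition sM12 : M12 := (Q12r 1, Q12r 0, Q12r 0, Q12r (-1)).
Definition tM12 : M12 :=
  (quarter 1 1 (-1) 1, quarter 1 1 (-1) 1, quarter (-1) 1 (-1) (-1), quarter 1 (-1) 1 1).
Definition uM12 : M12 := trM12 tM12.

Lemma Q12mx_one : Q12mx oneM12 = 1%:M.
Proof.
apply/matrixP => i j; rewrite !mxE.
by case: i => [[|[|//]] ?]; case: j => [[|[|//]] ?]; rewrite /= !(rmorph0, rmorph1); ring.
Qed.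

Lemma Q12mx_s : Q12mx sM12 = mat_s.
Proof.
apply/matrixP => i j; rewrite !mxE.
by case: i => [[|[|//]] ?]; case: j => [[|[|//]] ?];
  rewrite /= !(rmorph0, rmorph1, rmorphN); ring.
Qed.

Lemma Q12mx_t : Q12mx tM12 = mat_t.
Proof.
apply/matrixP => i j; rewrite !mxE.
case: i => [[|[|//]] ?]; case: j => [[|[|//]] ?];
  rewrite /= !(rmorphM, fmorphV, rmorph_int, rmorph_nat); by field.
Qed.

Lemma Q12mx_u : Q12mx uM12 = mat_u.
Proof. by rewrite Q12mx_tr Q12mx_t. Qed.

Lemma Q12mx_inv k ki : mulM12 k ki = oneM12 -> invmx (Q12mx k) = Q12mx ki.
Proof. by move=> kki; apply: invmx_eq; rewrite -Q12mx_mul kki Q12mx_one. Qed.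

Definition iter_closure (G T : eqType) (act : G -> T -> T) (gs : seq G) (n : nat)
    (L : seq T) : seq T :=
  iter n (fun L => undup (L ++ [seq act g a | g <- gs, a <- L])) L.

Lemma iter_closure_ind (G T : eqType) (P : T -> Prop) (act : G -> T -> T) gs n L :
  (forall a, a \in L -> P a) -> (forall g a, g \in gs -> P a -> P (act g a)) ->
  forall a, a \in iter_closure act gs n L -> P a.
Proof.
move=> PL Pact; elim: n => //= n IHn a; rewrite mem_undup mem_cat.
case/orP=> [/IHn // | /allpairsP [[g b] /= [gs_g /IHn Pb ->]]]; exact: Pact.
Qed.

(* Depth 9 is enough for every check below. *)
Definition mul_closure (gs : seq M12) : seq M12 := iter_closure mulM12 gs 9 [:: oneM12].

Lemma mul_closure_sub H gs : group_closed H -> (forall g, g \in gs -> H (Q12mx g)) ->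
  forall m, m \in mul_closure gs -> H (Q12mx m).
Proof.
move=> [H1 HM _] Hgs; apply: iter_closure_ind => [_ /[!inE] /eqP ->|g a /Hgs Hg Ha].
  by rewrite Q12mx_one.
by rewrite Q12mx_mul; exact: HM.
Qed.

(* The pairs (k, k^-1) for k = s, t, t^-1, u, u^-1, as s^2 = t^3 = u^3 = 1. *)
Definition gensG7 : seq (M12 * M12) :=
  [:: (sM12, sM12); (tM12, mulM12 tM12 tM12); (mulM12 tM12 tM12, tM12);
      (uM12, mulM12 uM12 uM12); (mulM12 uM12 uM12, uM12)].

Definition conjM12 (p : M12 * M12) (A : M12) : M12 := mulM12 (mulM12 p.2 A) p.1.

Definition S_list : seq M12 := iter_closure conjM12 gensG7 3 [:: sM12].

Definition Q12mx_mem (L : seq M12) (x : mx2) : Prop :=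
  exists2 m, m \in L & x = Q12mx m.

Lemma gensG7_inverse : all (fun p => mulM12 p.1 p.2 == oneM12) gensG7.
Proof. by vm_compute. Qed.

Lemma S_list_conj_closed :
  all (fun p => all (fun a => conjM12 p a \in S_list) S_list) gensG7.
Proof. by vm_compute. Qed.

Lemma gensG7_conj_st_mul_closure :
  let W := mul_closure [:: sM12; tM12] in
  all (fun p => all (fun y => conjM12 p y \in W) [:: sM12; tM12]) gensG7.
Proof. by vm_compute. Qed.

Lemma mul_closure_t_S_list_st :
  all (fun m => let W := mul_closure [:: tM12; m] in (sM12 \in W) && (tM12 \in W)) S_list.
Proof. by vm_compute. Qed.

Lemma conjM12E p A : p \in gensG7 ->
  Q12mx (conjM12 p A) = invmx (Q12mx p.1) *m Q12mx A *m Q12mx p.1.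
Proof.
move=> gp; have /allP/(_ p gp)/eqP/Q12mx_inv-> := gensG7_inverse.
by rewrite /conjM12 !Q12mx_mul.
Qed.

Lemma gensG7_unit p : p \in gensG7 -> Q12mx p.1 \in unitmx.
Proof.
move=> gp; have /allP/(_ p gp)/eqP kki := gensG7_inverse.
suff [] : Q12mx p.1 \in unitmx /\ Q12mx p.2 \in unitmx by [].
by apply: mulmx1_unit; rewrite -Q12mx_mul kki Q12mx_one.
Qed.

Lemma G7_normalizer P : (forall p, p \in gensG7 -> conj_stable P (Q12mx p.1)) ->
  forall g, G7 g -> normalizer P g.
Proof.
move=> Pgens; apply: gen_min; first exact: group_closed_normalizer.
have gen_pair k ki : (k, ki) \in gensG7 -> (ki, k) \in gensG7 -> normalizer P (Q12mx k).
  move=> gk gki; have /allP/(_ _ gk)/eqP kki := gensG7_inverse.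
  split; first exact: gensG7_unit gk.
  - exact: Pgens gk.
  - by rewrite (Q12mx_inv kki); exact: Pgens gki.
move=> x [->|[->|->]].
- by rewrite -Q12mx_s; apply: (gen_pair _ sM12); vm_compute.
- by rewrite -Q12mx_t; apply: (gen_pair _ (mulM12 tM12 tM12)); vm_compute.
- by rewrite -Q12mx_u; apply: (gen_pair _ (mulM12 uM12 uM12)); vm_compute.
Qed.

Lemma conj_stable_Q12mx_mem L p : p \in gensG7 -> all (fun a => conjM12 p a \in L) L ->
  conj_stable (Q12mx_mem L) (Q12mx p.1).
Proof.
move=> gp /allP Lp _ [m Lm ->].
by exists (conjM12 p m); [exact: Lp | rewrite conjM12E].
Qed.

Lemma G7_normalizer_S_list g : G7 g -> normalizer (Q12mx_mem S_list) g.
Proof.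
apply: G7_normalizer => p gp.
exact: conj_stable_Q12mx_mem gp (allP S_list_conj_closed p gp).
Qed.

Lemma S_cl_sub_S_list x : S_cl x -> Q12mx_mem S_list x.
Proof.
case=> g /G7_normalizer_S_list [_ Sg _] ->; apply: Sg.
by exists sM12; [vm_compute | rewrite Q12mx_s].
Qed.

Lemma G7_normalizer_G6 g : G7 g -> normalizer G6 g.
Proof.
apply: G7_normalizer => p gp.
have conjE y : Q12mx (conjM12 p y) = invmx (Q12mx p.1) *m Q12mx y *m Q12mx p.1.
  exact: conjM12E.
have /allP/(_ p gp)/allP conjW := gensG7_conj_st_mul_closure.
have G6W : forall m, m \in mul_closure [:: sM12; tM12] -> G6 (Q12mx m).
  apply: mul_closure_sub (group_closed_gen _) _ => y /[!inE] /orP[] /eqP ->.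
  - by rewrite Q12mx_s; apply: gen_in; left.
  - by rewrite Q12mx_t; apply: gen_in; right.
apply: gen_min; first exact: group_closed_conj (gensG7_unit gp) (group_closed_gen _).
move=> y [->|->]; rewrite -?Q12mx_s -?Q12mx_t -conjE; apply/G6W/conjW.
- exact: mem_head.
- exact: (mem_last sM12 [:: tM12]).
Qed.

Lemma G6_sub_t_S H s : group_closed H -> H mat_t -> Q12mx_mem S_list s -> H s ->
  forall a, G6 a -> H a.
Proof.
move=> gH Ht [m Sm ->] Hs.
have HW : forall w, w \in mul_closure [:: tM12; m] -> H (Q12mx w).
  apply: mul_closure_sub gH _ => y /[!inE] /orP[] /eqP ->; first by rewrite Q12mx_t.
  exact: Hs.
have /allP/(_ m Sm)/andP[sW tW] := mul_closure_t_S_list_st.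
apply: gen_min => [|x [->|->]]; first exact: gH.
- by rewrite -Q12mx_s; exact: HW sW.
- by rewrite -Q12mx_t; exact: HW tW.
Qed.

Lemma G6_sub_R1_S H r s : group_closed H -> H r -> H s -> R1 r -> S_cl s ->
  forall a, G6 a -> H a.
Proof.
move=> gH Hr Hs [g G7g r_def] /S_cl_sub_S_list Ss a G6a; rewrite r_def in Hr.
have [ug _ SgV] := G7_normalizer_S_list G7g.
have [_ _ G6gV] := G7_normalizer_G6 G7g.
have H's : H (invmx g *m (invmx (invmx g) *m s *m invmx g) *m g).
  by rewrite invmxK conj_mxK.
have := G6_sub_t_S (group_closed_conj ug gH) Hr (SgV _ Ss) H's (G6gV _ G6a).
by rewrite invmxK conj_mxK.
Qed.

Theorem proposition3p11 (X : 'M[algC]_2 -> Prop) :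
  (forall x, X x -> G6 x /\ is_reflection x) ->
  (exists2 r, X r & Rprime r) ->
  (exists2 r, X r & S_cl r) ->
  forall g, gen X g <-> G6 g.
Proof.
move=> XG6 [r Xr Rr] [s Xs Ss] g; split.
  by apply: gen_min (group_closed_gen _) _ g => x /XG6[].
have [r1 Xr1 R1r1] : exists2 r1, gen X r1 & R1 r1.
  case: Rr => [R1r | [r1 R1r1 r_inv]]; first by exists r; first exact: gen_in.
  by exists r1; rewrite // -[r1]invmxK -r_inv; apply/gen_inv/gen_in.
exact: G6_sub_R1_S (group_closed_gen X) Xr1 (gen_in Xs) R1r1 Ss g.
Qed.
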